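(* Let $G\subseteq\mathrm{GL}_n(\mathbb{R})$ be a finite group and $H$ a normal subgroup of $G$. Assume: (1) there are $g_1,\dots,g_k\in\mathbb{R}[\underline{X}]^G$ such that a ring homomorphism $\varphi_G:\mathbb{R}[\underline{X}]^G\to\mathbb{R}$ extends to a ring homomorphism $\mathbb{R}[\underline{X}]^H\to\mathbb{R}$ if and only if $\varphi_G(g_1)\ge0,\dots,\varphi_G(g_k)\ge0$; (2) there is $h\in\mathbb{R}[\underline{X}]^H$ such that a ring homomorphism $\varphi_H:\mathbb{R}[\underline{X}]^H\to\mathbb{R}$ extends to a ring homomorphism $\mathbb{R}[\underline{X}]\to\mathbb{R}$ if and only if $\varphi_H(h)\ge0$. Then a ring homomorphism $\varphi_G:\mathbb{R}[\underline{X}]^G\to\mathbb{R}$ extends to a ring homomorphism $\varphi:\mathbb{R}[\underline{X}]\to\mathbb{R}$ if and only if $\varphi_G(\mathcal{R}_G(h))\ge0$, $\varphi_G(g_1)\ge0,\dots,\varphi_G(g_k)\ge0$.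
   Context: $\mathbb{R}[\underline{X}]=\mathbb{R}[X_1,\dots,X_n]$ with $G$ acting by $h^\sigma(x)=h(\sigma^{-1}x)$; $\mathbb{R}[\underline{X}]^K$ is the ring of $K$-invariant polynomials; $\mathcal{R}_G(h)=\frac{1}{|G|}\sum_{\sigma\in G}h^\sigma$ is the Reynolds operator. *)

From Stdlib Require Import Reals.
From HB Require Import structures.
From mathcomp Require Import all_boot all_order all_algebra all_fingroup.
From mathcomp Require Import mxrepresentation.
From mathcomp Require Import multinomials.mpoly.
From mathcomp Require Import Rstruct.

Set Implicit Arguments.
Unset Strict Implicit.
Unset Printing Implicit Defensive.

Import GRing.Theory Num.Theory.
Local Open Scope ring_scope.

Notation RX n := {mpoly R[n]}.

(* Linear change of variables by a matrix A : (A . h)(x) = h(A x),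
   i.e. X_i |-> sum_j A i j X_j. *)
Definition mx_subst (n : nat) (A : 'M[R]_n) (h : RX n) : RX n :=
  h \mPo [tuple \sum_(j < n) A i j *: 'X_j | i < n].

(* The action h^sigma(x) = h(sigma^{-1} x) of an element sigma of the group
   (acting through the representation rG) on polynomials. *)
Definition poly_act (gT : finGroupType) (G : {group gT}) (n : nat)
  (rG : mx_representation R G n) (sigma : gT) (h : RX n) : RX n :=
  mx_subst (rG (sigma^-1)%g) h.

Definition poly_invariant (gT : finGroupType) (G : {group gT}) (n : nat)
  (rG : mx_representation R G n) (K : {set gT}) (h : RX n) : Prop :=
  forall sigma, sigma \in K -> poly_act rG sigma h = h.

Definition reynolds (gT : finGroupType) (G : {group gT}) (n : nat)
  (rG : mx_representation R G n) (h : RX n) : RX n :=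
  (#|G|%:R)^-1 *: \sum_(sigma in G) poly_act rG sigma h.

(* phi is a ring homomorphism from the subring S (given as a predicate) of
   R[X] to R: only the values of phi on S are relevant. *)
Definition ring_hom_on (n : nat) (S : RX n -> Prop) (phi : RX n -> R) : Prop :=
  [/\ phi 1 = 1,
      forall p q, S p -> S q -> phi (p + q) = phi p + phi q &
      forall p q, S p -> S q -> phi (p * q) = phi p * phi q].

Definition extends_on (n : nat) (S : RX n -> Prop) (phi psi : RX n -> R) : Prop :=
  forall p, S p -> psi p = phi p.

From Stdlib Require Import Reals.
From HB Require Import structures.
From mathcomp Require Import all_boot all_order all_algebra all_fingroup.
From mathcomp Require Import mxrepresentation.
From mathcomp Require Import multinomials.mpoly.
From mathcomp Require Import Rstruct.

Set Implicit Arguments.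
Unset Strict Implicit.
Unset Printing Implicit Defensive.
Import Order.TTheory GRing.Theory Num.Theory.
Local Open Scope ring_scope.

(* Since H is normal, G permutes the real points of R[X]^H, and a point of
   R[X]^H lifts to R^n iff it satisfies h >= 0.  A point phi_G of R[X]^G that
   lifts to R^n therefore has all G-translates of h nonnegative there, hence
   phi_G(R_G(h)) >= 0.  Conversely, if phi_G lifts to some phi_H on R[X]^H
   (conditions g_i >= 0) and phi_G(R_G(h)) >= 0, then the average over G of
   the values of h at the G-translates of phi_H is nonnegative, so one
   translate phi_H o sigma satisfies h >= 0; it lifts to R^n and still
   restricts to phi_G on the G-invariants. *)

Lemma comp_mpolyA n (p : RX n) (l1 l2 : n.-tuple (RX n)) :
  (p \mPo l1) \mPo l2 = p \mPo [tuple tnth l1 i \mPo l2 | i < n].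
Proof.
rewrite [p \mPo l1]comp_mpolyEX [RHS]comp_mpolyEX raddf_sum /=.
apply: eq_bigr => m _; rewrite comp_mpolyZ !comp_mpolyX rmorph_prod.
by congr (_ *: _); apply: eq_bigr => i _; rewrite rmorphXn tnth_map tnth_ord_tuple.
Qed.

HB.instance Definition _ n (A : 'M[R]_n) :=
  GRing.RMorphism.copy (mx_subst A)
    (comp_mpoly [tuple \sum_(j < n) A i j *: 'X_j | i < n]).

Lemma mx_substM n (A B : 'M[R]_n) (p : RX n) :
  mx_subst A (mx_subst B p) = mx_subst (B *m A) p.
Proof.
rewrite /mx_subst comp_mpolyA; congr (p \mPo _); apply: eq_from_tnth => i.
rewrite !tnth_map !tnth_ord_tuple raddf_sum /=.
under eq_bigr => j _ do
  rewrite comp_mpolyZ comp_mpolyXU -tnth_nth tnth_map tnth_ord_tuple scaler_sumr.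
rewrite exchange_big /=; apply: eq_bigr => l _.
by rewrite mxE scaler_suml; apply: eq_bigr => j _; rewrite scalerA.
Qed.

Section PolyAction.

Variables (gT : finGroupType) (G : {group gT}) (n : nat).
Variable rG : mx_representation R G n.
Implicit Types (K : {set gT}) (p q : RX n).

HB.instance Definition _ s :=
  GRing.RMorphism.copy (poly_act rG s) (mx_subst (rG s^-1)%g).

Lemma poly_actC s c : poly_act rG s c%:MP = c%:MP.
Proof. exact: comp_mpolyC. Qed.

Lemma poly_actA s t p : s \in G -> t \in G ->
  poly_act rG s (poly_act rG t p) = poly_act rG (s * t) p.
Proof. by move=> sG tG; rewrite /poly_act mx_substM -repr_mxM ?groupV // invMg. Qed.

Lemma poly_invariantC K c : poly_invariant rG K c%:MP.
Proof. by move=> s _; rewrite poly_actC. Qed.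

Lemma poly_invariantD K p q : poly_invariant rG K p -> poly_invariant rG K q ->
  poly_invariant rG K (p + q).
Proof. by move=> Kp Kq s sK; rewrite rmorphD /= Kp ?Kq. Qed.

Lemma reynolds_invariant p : poly_invariant rG G (reynolds rG p).
Proof.
move=> t tG; rewrite /reynolds -mul_mpolyC rmorphM /= poly_actC rmorph_sum /=.
congr (_ * _); rewrite [RHS](reindex_inj (mulgI t)) /=.
by apply: eq_big => [s | s sG]; rewrite ?(groupMl _ tG) ?poly_actA.
Qed.

Lemma poly_invariant_normal H s p : (H <| G)%g -> s \in G ->
  poly_invariant rG H p -> poly_invariant rG H (poly_act rG s p).
Proof.
move=> /andP[sHG nHG] sG Hp t tH; have tG := subsetP sHG t tH.
have tsH : (t ^ s)%g \in H by rewrite memJ_norm // (subsetP nHG).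
by rewrite poly_actA // conjgC -poly_actA ?groupJ // Hp.
Qed.

End PolyAction.

Lemma sumr_ge0_exists (T : realDomainType) (I : finType) (A : {pred I})
    (F : I -> T) :
  (exists i, i \in A) -> 0 <= \sum_(i in A) F i -> exists2 i, i \in A & 0 <= F i.
Proof.
move=> [i0 Ai0] sum_ge0.
have [i /andP[Ai Fi_ge0] | noF] := pickP [pred i | (i \in A) && (0 <= F i)].
  by exists i.
have F_lt0 i : i \in A -> F i < 0.
  by move=> Ai; have /negbT := noF i; rewrite /= Ai ltNge.
have : \sum_(i in A) F i < \sum_(i in A) 0.
  by apply: ltr_sum => //; apply/hasP; exists i0; rewrite ?mem_index_enum.
by rewrite big1_eq ltNge sum_ge0.
Qed.

Section RingHomOn.

Variables (n : nat) (S : RX n -> Prop) (phi : RX n -> R).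
Hypothesis phi_hom : ring_hom_on S phi.

Lemma ring_hom_on_sub (S' : RX n -> Prop) :
  (forall p, S' p -> S p) -> ring_hom_on S' phi.
Proof.
case: phi_hom => phi1 phiD phiM S'S.
by split=> // p q S'p S'q; [apply: phiD | apply: phiM]; apply: S'S.
Qed.

Lemma ring_hom_on_comp (f : {rmorphism RX n -> RX n}) :
  (forall p, S p -> S (f p)) -> ring_hom_on S (phi \o f).
Proof.
case: phi_hom => phi1 phiD phiM Sf; split=> [|p q Sp Sq|p q Sp Sq] /=.
- by rewrite rmorph1.
- by rewrite rmorphD phiD //; apply: Sf.
- by rewrite rmorphM phiM //; apply: Sf.
Qed.

Hypotheses (SC : forall c, S c%:MP) (SD : forall p q, S p -> S q -> S (p + q)).

Lemma ring_hom_on0 : phi 0 = 0.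
Proof.
case: phi_hom => _ phiD _; have S0 : S 0 by rewrite -mpolyC0.
by apply/(addrI (phi 0)); rewrite -phiD // !addr0.
Qed.

Lemma closed_sum (I : Type) (r : seq I) (P : pred I) (F : I -> RX n) :
  (forall i, P i -> S (F i)) -> S (\sum_(i <- r | P i) F i).
Proof. by move=> SF; elim/big_ind: _ => //; rewrite -mpolyC0. Qed.

Lemma ring_hom_on_sum (I : Type) (r : seq I) (P : pred I) (F : I -> RX n) :
  (forall i, P i -> S (F i)) ->
  phi (\sum_(i <- r | P i) F i) = \sum_(i <- r | P i) phi (F i).
Proof.
move=> SF; elim: r => [|i r IHr]; first by rewrite !big_nil ring_hom_on0.
rewrite !big_cons; case: ifP => // Pi.
by case: phi_hom => _ phiD _; rewrite phiD ?IHr //; [apply: SF | apply: closed_sum].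
Qed.

Lemma ring_hom_on_natr m : phi m%:R = m%:R.
Proof.
case: phi_hom => phi1 phiD _; elim: m => [|m IHm]; first exact: ring_hom_on0.
by rewrite !mulrS phiD ?phi1 ?IHm // -?mpolyC1 -?mpolyC_nat.
Qed.

Lemma ring_hom_on_invnC m : m%:R != 0 :> R -> phi (m%:R^-1)%:MP = m%:R^-1.
Proof.
case: phi_hom => phi1 _ phiM m_neq0; have S_natr : S m%:R by rewrite -mpolyC_nat.
apply: (mulIf m_neq0); rewrite [RHS]mulVf // -[X in _ * X]ring_hom_on_natr.
by rewrite -phiM // -mpolyC_nat -mpolyCM mulVf // mpolyC1.
Qed.

Section Reynolds.

Variables (gT : finGroupType) (G : {group gT}) (rG : mx_representation R G n).
Variable p : RX n.
Hypothesis S_act : forall s, s \in G -> S (poly_act rG s p).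

Lemma ring_hom_on_reynolds :
  phi (reynolds rG p) = #|G|%:R^-1 * \sum_(s in G) phi (poly_act rG s p).
Proof.
have G_neq0 : #|G|%:R != 0 :> R by rewrite pnatr_eq0 -lt0n cardG_gt0.
case: phi_hom => _ _ phiM; rewrite /reynolds -mul_mpolyC phiM.
- by rewrite ring_hom_on_invnC // ring_hom_on_sum.
- exact: SC.
- exact: closed_sum.
Qed.

Lemma reynolds_ge0 : (forall s, s \in G -> 0 <= phi (poly_act rG s p)) ->
  0 <= phi (reynolds rG p).
Proof.
by move=> act_ge0; rewrite ring_hom_on_reynolds mulr_ge0 ?invr_ge0 ?sumr_ge0.
Qed.

Lemma reynolds_ge0_exists : 0 <= phi (reynolds rG p) ->
  exists2 s, s \in G & 0 <= phi (poly_act rG s p).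
Proof.
rewrite ring_hom_on_reynolds pmulr_rge0 ?invr_gt0 ?ltr0n ?cardG_gt0 //.
by apply: sumr_ge0_exists; exists 1%g.
Qed.

End Reynolds.

End RingHomOn.

Theorem lemma3p15 (gT : finGroupType) (G H : {group gT}) (n : nat)
  (rG : mx_representation R G n) (rG_faithful : mx_faithful rG)
  (HnG : (H <| G)%g) (k : nat) (g : 'I_k -> RX n) (h : RX n)
  (g_inv : forall i, poly_invariant rG G (g i))
  (hyp1 : forall phiG, ring_hom_on (poly_invariant rG G) phiG ->
     (exists phiH, ring_hom_on (poly_invariant rG H) phiH /\
                   extends_on (poly_invariant rG G) phiG phiH)
     <-> (forall i, 0 <= phiG (g i)))
  (h_inv : poly_invariant rG H h)
  (hyp2 : forall phiH, ring_hom_on (poly_invariant rG H) phiH ->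
     (exists phi, ring_hom_on (fun _ => True) phi /\
                  extends_on (poly_invariant rG H) phiH phi)
     <-> 0 <= phiH h) :
  forall phiG, ring_hom_on (poly_invariant rG G) phiG ->
    (exists phi, ring_hom_on (fun _ => True) phi /\
                 extends_on (poly_invariant rG G) phiG phi)
    <-> (0 <= phiG (reynolds rG h) /\ forall i, 0 <= phiG (g i)).
Proof.
move=> phiG phiG_hom.
have H_act s : s \in G -> forall p, poly_invariant rG H p ->
    poly_invariant rG H (poly_act rG s p).
  by move=> sG p; apply: poly_invariant_normal.
split=> [[phi [phi_hom phi_ext]] | [Rh_ge0 g_ge0]].
- split; last first.
    apply/(hyp1 _ phiG_hom); exists phi.
    by split=> //; apply: (ring_hom_on_sub phi_hom).
  rewrite -phi_ext; last exact: reynolds_invariant.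
  apply: (reynolds_ge0 phi_hom) => // s sG.
  have psi_hom := ring_hom_on_comp phi_hom (f := poly_act rG s) (fun _ _ => I).
  apply/(hyp2 _ (ring_hom_on_sub psi_hom _)) => //.
  by exists (phi \o poly_act rG s).
- have [phiH [phiH_hom phiH_ext]] := (hyp1 _ phiG_hom).2 g_ge0.
  rewrite -phiH_ext in Rh_ge0; last exact: reynolds_invariant.
  have [s sG hs_ge0] : exists2 s, s \in G & 0 <= phiH (poly_act rG s h).
    apply: (reynolds_ge0_exists phiH_hom) Rh_ge0 => [c | p q | s sG].
    + exact: poly_invariantC.
    + exact: poly_invariantD.
    + exact: H_act.
  have psi_hom := ring_hom_on_comp phiH_hom (f := poly_act rG s) (H_act s sG).
  have [phi [phi_hom phi_ext]] := (hyp2 _ psi_hom).2 hs_ge0.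
  exists phi; split=> // p Gp.
  have Hp : poly_invariant rG H p.
    by move=> t /(subsetP (normal_sub HnG)); apply: Gp.
  by rewrite phi_ext //= Gp // phiH_ext.
Qed.
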